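(* Let $p$ be a prime. Define $$\Phi:\mathbb{Z}_p[X_0,X_1;Y_0,Y_1]_{22}\to\mathbb{Z}_p[X_0,X_1]_2\times\mathbb{Z}_p[X_0,X_1]_4,\qquad F_0Y_0^2+F_1Y_0Y_1+F_2Y_1^2\mapsto(F_1,-F_0F_2),$$ where $F_0,F_1,F_2\in\mathbb{Z}_p[X_0,X_1]_2$, and let $\Phi_p$ be the analogous map on forms with coefficients in $\mathbb{F}_p$. Let $\overline F\in\mathbb{F}_p[X_0,X_1;Y_0,Y_1]_{22}$ be either (i) $\overline F=f(X_0Y_0,X_0Y_1+X_1Y_0)$ with $f$ an irreducible binary quadratic form over $\mathbb{F}_p$, or (ii) $\overline F=(X_0Y_1-X_1Y_0)^2$. Then $\Phi$ restricts to a measure-preserving map $$\{F\in\mathbb{Z}_p[X_0,X_1;Y_0,Y_1]_{22}:F\equiv\overline F\ (\mathrm{mod}\ p)\}\to\{G\in\mathbb{Z}_p[X_0,X_1]_2\times\mathbb{Z}_p[X_0,X_1]_4:G\equiv\Phi_p(\overline F)\ (\mathrm{mod}\ p)\}.$$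
   Context: $\mathbb{Z}_p[X_0,X_1]_d$ denotes binary forms of degree $d$ over $\mathbb{Z}_p$, and $\mathbb{Z}_p[X_0,X_1;Y_0,Y_1]_{22}$ denotes forms homogeneous of degree 2 in $(X_0,X_1)$ and of degree 2 in $(Y_0,Y_1)$; these are identified with $\mathbb{Z}_p^3$, $\mathbb{Z}_p^5$ and $\mathbb{Z}_p^9$ via coefficients and carry Haar measure, and the two residue classes above are given the (normalized) restrictions of these Haar measures. *)

From HB Require Import structures.
From mathcomp Require Import all_boot all_order all_algebra.
From mathcomp Require Import boolp classical_sets reals ereal.
From mathcomp Require Import measure.
From mathcomp Require Import intdiv.
Set Implicit Arguments. Unset Strict Implicit. Unset Printing Implicit Defensive.
Import Order.TTheory GRing.Theory Num.Theory.
Local Open Scope ring_scope.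
Local Open Scope classical_set_scope.

(* The p-adic integers Z_p, as compatible sequences of residues:       *)
(* zdig x k is the residue of x modulo p^k, in [0, p^k).              *)
Record Zp (p : nat) := MkZp {
  zdig : nat -> int ;
  zdig_mod : forall k, (zdig k %% (p ^ k)%:Z)%Z = zdig k ;
  zdig_compat : forall k, (zdig k.+1 %% (p ^ k)%:Z)%Z = zdig k }.

Lemma modz_expS (p k : nat) (m : int) :
  ((m %% (p ^ k.+1)%:Z)%Z %% (p ^ k)%:Z)%Z = (m %% (p ^ k)%:Z)%Z.
Proof.
rewrite {2}(divz_eq m (p ^ k.+1)%:Z) expnS PoszM mulrA.
by rewrite modzMDl.
Qed.

Section ZpOps.
Variable p : nat.

Definition Zp_zero : Zp p.
Proof. by apply: (@MkZp p (fun=> 0%R)) => k; rewrite mod0z. Defined.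

Definition Zp_add (x y : Zp p) : Zp p.
Proof.
apply: (@MkZp p (fun k => ((zdig x k + zdig y k) %% (p ^ k)%:Z)%Z)) => k.
  by rewrite modz_mod.
by rewrite modz_expS -modzDm !zdig_compat.
Defined.

Definition Zp_mul (x y : Zp p) : Zp p.
Proof.
apply: (@MkZp p (fun k => ((zdig x k * zdig y k) %% (p ^ k)%:Z)%Z)) => k.
  by rewrite modz_mod.
by rewrite modz_expS -modzMm !zdig_compat.
Defined.

Definition Zp_opp (x : Zp p) : Zp p.
Proof.
apply: (@MkZp p (fun k => ((- zdig x k) %% (p ^ k)%:Z)%Z)) => k.
  by rewrite modz_mod.
by rewrite modz_expS -modzNm !zdig_compat.
Defined.

End ZpOps.

HB.instance Definition _ p := gen_eqMixin (Zp p).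
HB.instance Definition _ p := gen_choiceMixin (Zp p).
HB.instance Definition _ p := isPointed.Build (Zp p) (Zp_zero p).

Definition Zp_red (p : nat) (x : Zp p) : 'F_p := (zdig x 1)%:~R.

(* Z_p^I (I a finite index set of coefficients) with the Borel         *)
(* sigma-algebra, generated by the balls {w | w = v mod p^k}.          *)
Definition zball (p : nat) (I : finType) (v : I -> Zp p) (k : nat)
  : set (I -> Zp p) := [set w | forall i, zdig (w i) k = zdig (v i) k].

Definition zballs (p : nat) (I : finType) : set (set (I -> Zp p)) :=
  [set A | exists v k, A = zball v k].

Definition ZpV (p : nat) (I : finType) := g_sigma_algebraType (@zballs p I).

Definition is_haar (R : realType) (p : nat) (I : finType)
  (mu : set (ZpV p I) -> \bar R) : Prop :=
  forall (v : ZpV p I) (k : nat),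
    mu (zball v k) = ((p%:R : R) ^- (#|I| * k))%:E.

Definition residue_class (p : nat) (I : finType) (Fbar : I -> 'F_p)
  : set (ZpV p I) := [set F | forall i, Zp_red (F i) = Fbar i].

(* f restricts to a measure-preserving map S -> T, where S and T carry the
   normalized restrictions of mu and nu *)
Definition measure_preserving_restr (R : realType) (d1 d2 : measure_display)
  (T1 : measurableType d1) (T2 : measurableType d2)
  (mu : set T1 -> \bar R) (nu : set T2 -> \bar R)
  (S : set T1) (T : set T2) (f : T1 -> T2) : Prop :=
  f @` S `<=` T /\
  forall B : set T2, measurable B ->
    measurable (S `&` f @^-1` B) /\
    fine (mu (S `&` f @^-1` B)) / fine (mu S) = fine (nu (T `&` B)) / fine (nu T).

(* A form in [X0,X1;Y0,Y1]_{22} is F : 'I_3 * 'I_3 -> coeffs, where    *)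
(* F (j, i) is the coefficient of X0^(2-i) X1^i Y0^(2-j) Y1^j; thus    *)
(* F = F_0 Y0^2 + F_1 Y0 Y1 + F_2 Y1^2 with F_j = fun i => F (j, i).   *)
(* A pair (G1, G2) in [X0,X1]_2 x [X0,X1]_4 is G : 'I_3 + 'I_5 -> .,   *)
(* G (inl i) = coeff of X0^(2-i) X1^i in G1, G (inr m) = coeff of      *)
(* X0^(4-m) X1^m in G2.                                                *)
Definition o0 : 'I_3 := @Ordinal 3 0 isT.
Definition o1 : 'I_3 := @Ordinal 3 1 isT.
Definition o2 : 'I_3 := @Ordinal 3 2 isT.

Definition prod22 (T : Type) (add mul : T -> T -> T) (a c : 'I_3 -> T)
  (m : 'I_5) : T :=
  match nat_of_ord m with
  | 0 => mul (a o0) (c o0)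
  | 1 => add (mul (a o0) (c o1)) (mul (a o1) (c o0))
  | 2 => add (add (mul (a o0) (c o2)) (mul (a o1) (c o1))) (mul (a o2) (c o0))
  | 3 => add (mul (a o1) (c o2)) (mul (a o2) (c o1))
  | _ => mul (a o2) (c o2)
  end.

Definition Phi_gen (T : Type) (add mul : T -> T -> T) (opp : T -> T)
  (F : 'I_3 * 'I_3 -> T) : 'I_3 + 'I_5 -> T :=
  fun o => match o with
  | inl i => F (o1, i)
  | inr m => opp (prod22 add mul (fun i => F (o0, i)) (fun i => F (o2, i)) m)
  end.

Definition Phi (p : nat) (F : ZpV p ('I_3 * 'I_3)%type) : ZpV p ('I_3 + 'I_5)%type :=
  Phi_gen (@Zp_add p) (@Zp_mul p) (@Zp_opp p) F.

Definition Phi_p (p : nat) (F : 'I_3 * 'I_3 -> 'F_p) : 'I_3 + 'I_5 -> 'F_p :=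
  Phi_gen +%R *%R -%R F.

Definition bqf_irreducible (p : nat) (a b c : 'F_p) : Prop :=
  ~ exists l0 l1 m0 m1 : 'F_p,
      [/\ a = l0 * m0, b = l0 * m1 + l1 * m0 & c = l1 * m1].

(* f(X0 Y0, X0 Y1 + X1 Y0) for f = a U^2 + b U V + c V^2:
   = a X0^2 Y0^2 + b X0^2 Y0Y1 + b X0X1 Y0^2
     + c (X0^2 Y1^2 + 2 X0X1 Y0Y1 + X1^2 Y0^2) *)
Definition Fbar_i (p : nat) (a b c : 'F_p) (ji : 'I_3 * 'I_3) : 'F_p :=
  match nat_of_ord ji.1, nat_of_ord ji.2 with
  | 0, 0 => a
  | 0, 1 => b
  | 0, 2 => c
  | 1, 0 => b
  | 1, 1 => c *+ 2
  | 2, 0 => c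
  | _, _ => 0
  end.

(* (X0 Y1 - X1 Y0)^2 = X1^2 Y0^2 - 2 X0X1 Y0Y1 + X0^2 Y1^2 *)
Definition Fbar_ii (p : nat) (ji : 'I_3 * 'I_3) : 'F_p :=
  match nat_of_ord ji.1, nat_of_ord ji.2 with
  | 0, 2 => 1
  | 1, 1 => - (1 *+ 2)
  | 2, 0 => 1
  | _, _ => 0
  end.

(* Reduction mod p commutes with Phi, so Phi maps the residue class S of Fbar
   into the residue class T of Phi_p Fbar, two balls of Haar measure p^-9 and
   p^-8.  In both cases of the theorem F_0 reduces to a form with a nonzero
   X1^2-coefficient and F_2 to a nonzero multiple of X0^2, so a Hensel-type
   argument shows that, modulo p^k, a point F of S is determined by Phi F and by
   the X0^2-coefficient of F_2, which is fixed modulo p.  Hence each fibre of Phi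
   mod p^k over T has at most p^(k-1) points; since S has p^(9(k-1)) points and
   T has p^(8(k-1)) points mod p^k, every fibre has exactly p^(k-1) of them.
   Thus mu (S `&` Phi^-1 B) = p^-1 nu (T `&` B) for every ball B, hence for every
   measurable B, the balls forming a pi-system that generates the sigma-algebra. *)

From Pilot Require Import Defs.
From HB Require Import structures.
From mathcomp Require Import all_boot all_order all_algebra.
From mathcomp Require Import boolp classical_sets reals ereal.
From mathcomp Require Import measure.
From mathcomp Require Import intdiv.
From mathcomp Require Import zify ring.
From mathcomp Require Import cardinality fsbigop.
Set Implicit Arguments. Unset Strict Implicit. Unset Printing Implicit Defensive.
Import Order.TTheory GRing.Theory Num.Theory.
Local Open Scope ring_scope.
Local Open Scope classical_set_scope.

Local Notation I9 := ('I_3 * 'I_3)%type.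
Local Notation I8 := ('I_3 + 'I_5)%type.
Local Notation P22 := (prod22 +%R *%R).

Lemma modz_dvdm (d d' m : int) : (d %| d')%Z -> ((m %% d')%Z %% d)%Z = (m %% d)%Z.
Proof.
move=> /dvdzP[c ->]; rewrite {2}(divz_eq m (c * d)) mulrA.
by rewrite modzMDl.
Qed.

Lemma modzN_congr (x y d : int) :
  (x = y %[mod d])%Z -> (- x = - y %[mod d])%Z.
Proof. by move=> h; rewrite -modzNm h modzNm. Qed.

Lemma modzD_congr (x y x' y' d : int) :
  (x = x' %[mod d])%Z -> (y = y' %[mod d])%Z -> (x + y = x' + y' %[mod d])%Z.
Proof. by move=> h1 h2; rewrite -modzDm h1 h2 modzDm. Qed.

Lemma Fp_intr_eq0 (p : nat) (z : int) : prime p ->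
  ((z%:~R : 'F_p) == 0) = (p%:Z %| z)%Z.
Proof.
move=> hp; rewrite {1}[z]intEsign rmorphM rmorph_sign mulf_eq0 signr_eq0 /=.
by rewrite dvdzE /= -val_eqE /= val_Fp_nat.
Qed.

Lemma Fp_intr_eq (p : nat) (z z' : int) : prime p ->
  ((z%:~R : 'F_p) == z'%:~R) = (p%:Z %| z - z')%Z.
Proof. by move=> hp; rewrite -Fp_intr_eq0 // rmorphB subr_eq0. Qed.

Lemma Fp_intr_mod (p : nat) (z : int) : prime p ->
  (((z %% p)%Z)%:~R : 'F_p) = z%:~R.
Proof.
move=> hp; apply/eqP; rewrite Fp_intr_eq // {2}(divz_eq z p).
by rewrite opprD addrCA subrr addr0 rpredN dvdz_mull.
Qed.

Lemma bounded_sum_eq_const (T : finType) (P : pred T) (f : T -> nat) c :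
  (forall x, x \in P -> f x <= c)%N -> (\sum_(x in P) f x = #|P| * c)%N ->
  forall x, x \in P -> f x = c.
Proof.
move=> f_le sum_f x Px; apply/eqP; rewrite eqn_leq f_le //= leqNgt; apply/negP => fx_lt.
have : (\sum_(y in P | y != x) f y <= \sum_(y in P | y != x) c)%N.
  by apply: leq_sum => y /andP[Py _]; apply: f_le.
move: sum_f; rewrite -sum_nat_const (bigD1 x) //= [in RHS](bigD1 x) //=.
lia.
Qed.

Section ZpDigits.
Variable p : nat.

Lemma zdig0 (x : Defs.Zp p) : zdig x 0 = 0.
Proof. by rewrite -zdig_mod expn0 modz1. Qed.

Lemma zdig_le (x : Defs.Zp p) j k : (j <= k)%N -> zdig x j = (zdig x k %% (p ^ j)%:Z)%Z.
Proof.
move/subnKC <-; elim: (k - j)%N => [|n IH]; first by rewrite addn0 zdig_mod.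
rewrite IH addnS -(zdig_compat x (j + n)) modz_dvdm //.
by rewrite dvdzE /= dvdn_exp2l // leq_addr.
Qed.

Definition zlift (n : nat) : Defs.Zp p.
Proof.
apply: (@MkZp p (fun j => ((n%:Z) %% (p ^ j)%:Z)%Z)) => k.
  by rewrite modz_mod.
by rewrite modz_expS.
Defined.

Lemma zdig_zlift k (d : 'I_(p ^ k)) : zdig (zlift d) k = (d : nat)%:Z.
Proof. by rewrite /= modz_small // ltz_nat ltn_ord andbT. Qed.

Hypothesis p_gt0 : (0 < p)%N.

Lemma p_expz_gt0 k : 0 < (p ^ k)%:Z.
Proof. by rewrite ltz_nat expn_gt0 p_gt0. Qed.

Lemma zdig_ge0 (x : Defs.Zp p) k : 0 <= zdig x k.
Proof. by rewrite -zdig_mod modz_ge0 // gt_eqF // p_expz_gt0. Qed.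

Lemma zdig_lt (x : Defs.Zp p) k : zdig x k < (p ^ k)%:Z.
Proof. by rewrite -zdig_mod ltz_pmod // p_expz_gt0. Qed.

Definition dig k (x : Defs.Zp p) : 'I_(p ^ k).
Proof.
by apply: (@Ordinal _ (absz (zdig x k))); have := zdig_ge0 x k; have := zdig_lt x k; lia.
Defined.

Lemma dig_val (x : Defs.Zp p) k : (dig k x : nat)%:Z = zdig x k.
Proof. by rewrite /= gez0_abs // zdig_ge0. Qed.

Lemma zdig_eq_dvd (x y : Defs.Zp p) k :
  ((p ^ k)%:Z %| zdig x k - zdig y k)%Z -> zdig x k = zdig y k.
Proof. by move=> h; rewrite -zdig_mod -[RHS]zdig_mod; apply/eqP; rewrite eqz_mod_dvd. Qed.

End ZpDigits.

Section Cylinders.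
Variables (p : nat) (I : finType).

Definition cylinder k (A : set (ZpV p I)) := forall x y : ZpV p I,
  (forall i, zdig (x i) k = zdig (y i) k) -> A x -> A y.

Lemma cylinderI k (A B : set (ZpV p I)) : cylinder k A -> cylinder k B -> cylinder k (A `&` B).
Proof. by move=> cA cB x y xy [Ax Bx]; split; [apply: cA Ax | apply: cB Bx]. Qed.

Lemma zball_measurable (v : ZpV p I) k : measurable (zball v k : set (ZpV p I)).
Proof. by apply: sub_sigma_algebra; exists v, k. Qed.

Lemma zball0 (v : ZpV p I) : zball v 0 = setT.
Proof. by apply/seteqP; split => // x _ i; rewrite !zdig0. Qed.

Lemma zball_sub (v w x : ZpV p I) k l : (k <= l)%N -> zball v k x -> zball w l x ->
  zball w l `<=` zball v k.
Proof.
move=> kl vx wx y wy i.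
by rewrite (zdig_le (y i) kl) wy -wx -(zdig_le (x i) kl) vx.
Qed.

Lemma zball_setI_closed : setI_closed [set A | A = set0 \/ @zballs p I A].
Proof.
move=> _ _ [->|[v [k ->]]] [->|[w [l ->]]]; rewrite ?set0I ?setI0; try by left.
have [[x [vx wx]]|disj] := pselect (exists x, zball v k x /\ zball w l x); last first.
  by left; apply/seteqP; split => // y [vy wy]; apply: disj; exists y.
right; have [kl|/ltnW lk] := leqP k l.
  by exists w, l; rewrite setIidr //; apply: zball_sub vx wx.
by exists v, k; rewrite setIidl //; apply: zball_sub wx vx.
Qed.

Lemma zball_measure_unique (R : realType) (m1 m2 : {measure set (ZpV p I) -> \bar R}) :
  (m1 setT < +oo)%E -> (forall v k, m1 (zball v k) = m2 (zball v k)) ->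
  forall A, measurable A -> m1 A = m2 A.
Proof.
move=> m1T m12 A mA; pose G := [set A : set (ZpV p I) | A = set0 \/ @zballs p I A].
apply: (measure_unique G (fun=> setT)) => //.
- apply/seteqP; split.
    apply: smallest_sub; first exact: smallest_sigma_algebra.
    by move=> B zB; apply: sub_sigma_algebra; right.
  apply: smallest_sub; first exact: sigma_algebra_measurable.
  by move=> B [->|zB]; [exact: measurable0 | exact: sub_sigma_algebra].
- exact: zball_setI_closed.
- by move=> _; right; exists point, 0%N; rewrite zball0.
- by rewrite bigcup_const.
- by move=> B [->|[v [k ->]]]; rewrite ?measure0.
Qed.

Definition liftv k (d : {ffun I -> 'I_(p ^ k)}) : ZpV p I := fun i => zlift p (d i).

Definition digits_in k (A : set (ZpV p I)) : pred {ffun I -> 'I_(p ^ k)} :=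
  [pred d | `[< A (liftv d) >]].
Arguments digits_in k A : clear implicits.

Lemma zdig_liftv k (d : {ffun I -> 'I_(p ^ k)}) i : zdig (liftv d i) k = (d i : nat)%:Z.
Proof. exact: zdig_zlift. Qed.

Lemma liftv_zdig_inj k (d d' : {ffun I -> 'I_(p ^ k)}) :
  (forall i, zdig (liftv d i) k = zdig (liftv d' i) k) -> d = d'.
Proof.
by move=> h; apply/ffunP => i; apply/val_inj/eqP; rewrite -eqz_nat -!zdig_liftv h.
Qed.

Hypothesis p_gt0 : (0 < p)%N.

Definition digv k (x : ZpV p I) : {ffun I -> 'I_(p ^ k)} := [ffun i => dig p_gt0 k (x i)].

Lemma zdig_liftv_digv k x i : zdig (liftv (digv k x) i) k = zdig (x i) k.
Proof. by rewrite zdig_liftv ffunE dig_val. Qed.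

Lemma zball_liftv_digv k (w : ZpV p I) : zball (liftv (digv k w)) k = zball w k.
Proof. by apply/seteqP; split => x xw i; rewrite xw zdig_liftv_digv. Qed.

Lemma digvP k x (d : {ffun I -> 'I_(p ^ k)}) :
  (forall i, zdig (x i) k = zdig (liftv d i) k) -> digv k x = d.
Proof. by move=> h; apply: liftv_zdig_inj => i; rewrite zdig_liftv_digv. Qed.

Lemma digv_zball k x (d : {ffun I -> 'I_(p ^ k)}) : digv k x = d <-> zball (liftv d) k x.
Proof. by split=> [<- i|dx]; [rewrite zdig_liftv_digv | apply: digvP => i; rewrite dx]. Qed.

Lemma cylinder_bigcup k A : cylinder k A ->
  A = \bigcup_(d in [set` digits_in k A]) zball (liftv d) k.
Proof.
move=> cA; apply/seteqP; split => [x Ax|x [d Ad dx]].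
  exists (digv k x); last by move=> i; rewrite zdig_liftv_digv.
  by rewrite /= inE; apply: (cA x) => // i; rewrite zdig_liftv_digv.
by apply: (cA (liftv d)); [move=> i; rewrite dx | move: Ad; rewrite /= inE].
Qed.

Lemma cylinder_measurable k A : cylinder k A -> measurable A.
Proof.
move=> /cylinder_bigcup ->; apply: fin_bigcup_measurable; first exact: finite_finset.
by move=> d _; apply: zball_measurable.
Qed.

Lemma cylinder_measure (R : realType) (mu : {measure set (ZpV p I) -> \bar R}) k A :
  is_haar mu -> cylinder k A ->
  mu A = (#|digits_in k A|%:R * (p%:R : R) ^- (#|I| * k))%:E.
Proof.
move=> Hmu /cylinder_bigcup eA; rewrite [in LHS]eA measure_fin_bigcup //; first last.
- by move=> d _; apply: zball_measurable.
- move=> d d' _ _ [x [dx d'x]]; apply: liftv_zdig_inj => i.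
  by rewrite -dx -d'x.
rewrite (eq_fsbigr (fun _ => ((p%:R : R) ^- (#|I| * k))%:E)); last by move=> d _; apply: Hmu.
rewrite -(bigfs _ _ (r := enum {ffun I -> 'I_(p ^ k)})) ?enum_uniq //; last first.
  by move=> d _; rewrite mem_enum.
rewrite sumEFin big_enum_cond /= (eq_bigl (mem (digits_in k A))) //.
by rewrite sumr_const mulr_natl.
Qed.

End Cylinders.
Arguments digits_in {p I} k A.

Section Reduction.
Variables (p : nat) (I : finType).
Hypothesis hp : prime p.

Lemma Zp_red_zdig (x : Defs.Zp p) k : (0 < k)%N -> ((zdig x k)%:~R : 'F_p) = Zp_red x.
Proof. by move=> k_gt0; rewrite /Zp_red (zdig_le x k_gt0) expn1 Fp_intr_mod. Qed.

Lemma residue_class_cylinder k (G : I -> 'F_p) : (0 < k)%N -> cylinder k (residue_class G).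
Proof. by move=> k_gt0 x y xy Gx i; rewrite -(Zp_red_zdig _ k_gt0) -xy Zp_red_zdig. Qed.

Lemma Fp_intr_small (z : int) : 0 <= z < p%:Z -> (((z%:~R : 'F_p) : nat) : int) = z.
Proof.
case: z => // n /andP[_]; rewrite ltz_nat => n_lt_p.
by rewrite /= val_Fp_nat // modn_small.
Qed.

Lemma Zp_red_eq (x : Defs.Zp p) (a : 'F_p) : (Zp_red x = a) <-> (zdig x 1 = a :> int).
Proof.
split=> [<-|xa]; last by rewrite /Zp_red xa -pmulrn natr_Zp.
rewrite Fp_intr_small // zdig_ge0 ?prime_gt0 //=.
by have := zdig_lt (prime_gt0 hp) x 1; rewrite expn1.
Qed.

Lemma residue_class_zball (G : I -> 'F_p) :
  residue_class G = zball (fun i => zlift p (G i)) 1.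
Proof.
have zlift_G i : zdig (zlift p (G i)) 1 = G i.
  rewrite /= modz_small // expn1 ltz_nat -[X in (_ < X)%N](Fp_cast hp) ltn_ord.
  by rewrite andbT.
apply/seteqP; split => x Gx i; first by rewrite zlift_G; apply/Zp_red_eq.
by apply/Zp_red_eq; rewrite Gx.
Qed.

Lemma residue_class_measurable (G : I -> 'F_p) : measurable (residue_class G).
Proof. by rewrite residue_class_zball; apply: zball_measurable. Qed.

Variables (R : realType) (mu : {measure set (ZpV p I) -> \bar R}).
Hypothesis Hmu : is_haar mu.

Lemma residue_class_measure (G : I -> 'F_p) :
  mu (residue_class G) = ((p%:R : R) ^- #|I|)%:E.
Proof. by rewrite residue_class_zball Hmu muln1. Qed.

Lemma card_digits_residue_class k (G : I -> 'F_p) : (0 < k)%N ->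
  #|digits_in k (residue_class G)| = (p ^ (#|I| * k.-1))%N.
Proof.
move=> k_gt0.
have := cylinder_measure (prime_gt0 hp) Hmu (residue_class_cylinder (G := G) k_gt0).
rewrite residue_class_measure => -[eN].
have p_neq0 : (p%:R : R) != 0 by rewrite pnatr_eq0 -lt0n prime_gt0.
apply/eqP; rewrite -(eqr_nat R) natrX -[X in X == _](mulfVK (expf_neq0 (#|I| * k) p_neq0)).
by rewrite -eN -(prednK k_gt0) mulnS exprD mulKf ?expf_neq0.
Qed.

End Reduction.

Section PhiDigits.
Variable p : nat.

Lemma zdig_Phi_inr (F : ZpV p I9) m k :
  zdig (Phi F (inr m)) k =
  ((- P22 (fun i => zdig (F (o0, i)) k) (fun i => zdig (F (o2, i)) k) m) %% (p ^ k)%:Z)%Z.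
Proof.
rewrite /Phi /Phi_gen /prod22; case: m => [[|[|[|[|m]]]] hm] /=.
all: apply: modzN_congr; rewrite ?modz_mod; repeat (apply: modzD_congr; rewrite ?modz_mod).
all: by rewrite ?modz_mod.
Qed.

Lemma zdig_Phi_eq (F F' : ZpV p I9) k : (forall i, zdig (F i) k = zdig (F' i) k) ->
  forall o, zdig (Phi F o) k = zdig (Phi F' o) k.
Proof.
move=> FF' [i|m]; first exact: FF'.
by rewrite !zdig_Phi_inr; congr ((- prod22 _ _ _ _ _) %% _)%Z; apply: funext => i.
Qed.

Lemma Phi_preimage_cylinder (w : ZpV p I8) k : cylinder k (@Phi p @^-1` zball w k).
Proof. by move=> x y xy wx o; rewrite -(zdig_Phi_eq xy). Qed.

Hypothesis hp : prime p.

Lemma measurable_Phi : measurable_fun setT (@Phi p).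
Proof.
apply: (@measurability _ _ _ _ setT (@Phi p) (@zballs p I8)) => // _ [_ [w [k ->]] <-].
by rewrite setTI; apply: (cylinder_measurable (prime_gt0 hp)); exact: Phi_preimage_cylinder.
Qed.

Lemma Zp_red_Phi (F : ZpV p I9) o :
  Zp_red (Phi F o) = Phi_p (fun i => Zp_red (F i)) o.
Proof.
case: o => [i|m] //.
rewrite /Zp_red zdig_Phi_inr expn1 Fp_intr_mod // /Phi_p /Phi_gen /prod22.
by case: m => [[|[|[|[|m]]]] hm] /=; rewrite ?rmorphN ?rmorphD ?rmorphM.
Qed.

Lemma Phi_residue_class (Fbar : I9 -> 'F_p) :
  @Phi p @` residue_class Fbar `<=` residue_class (Phi_p Fbar).
Proof.
move=> _ [F FFbar <-] o; rewrite /residue_class /= Zp_red_Phi.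
by congr (Phi_p _ o); apply: funext => i; apply: FFbar.
Qed.

End PhiDigits.

Lemma ord3P (i : 'I_3) : [\/ i = o0, i = o1 | i = o2].
Proof.
by case: i => [[|[|[|i]]] hi]; [constructor 1|constructor 2|constructor 3|]; try exact/val_inj.
Qed.

Lemma prod22_rmorph (R S : pzRingType) (f : {rmorphism R -> S}) (a b : 'I_3 -> R) m :
  f (P22 a b m) = P22 (f \o a) (f \o b) m.
Proof. by rewrite /prod22; case: m => [[|[|[|[|m]]]] hm] /=; rewrite ?rmorphD ?rmorphM. Qed.

Lemma prod22_perturb (R : comPzRingType) (q : R) (a b s t : 'I_3 -> R) m :
  P22 a (fun i => b i + q * t i) m - P22 (fun i => a i - q * s i) b m =
  q * (P22 a t m + P22 s b m).
Proof. by rewrite /prod22; case: m => [[|[|[|[|m]]]] hm] /=; ring. Qed.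

Lemma prod22_linear_eq0 (R : idomainType) (a b s t : 'I_3 -> R) :
  a o2 != 0 -> b o0 != 0 -> b o1 = 0 -> b o2 = 0 -> t o0 = 0 ->
  (forall m, P22 a t m + P22 s b m = 0) -> (forall i, s i = 0) /\ (forall i, t i = 0).
Proof.
move=> a2 b0 b1 b2 t0 L0.
have := L0 (@Ordinal 5 0 isT); have := L0 (@Ordinal 5 1 isT).
have := L0 (@Ordinal 5 2 isT); have := L0 (@Ordinal 5 3 isT).
have := L0 (@Ordinal 5 4 isT).
rewrite /prod22 /= t0 b1 b2 !(mulr0, mul0r, addr0, add0r).
move=> /eqP; rewrite mulf_eq0 (negbTE a2) /= => /eqP t2; rewrite t2 !(mulr0, add0r).
move=> /eqP; rewrite mulf_eq0 (negbTE a2) /= => /eqP t1; rewrite t1 !(mulr0, add0r).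
move=> /eqP; rewrite mulf_eq0 (negbTE b0) orbF => /eqP s2.
move=> /eqP; rewrite mulf_eq0 (negbTE b0) orbF => /eqP s1.
move=> /eqP; rewrite mulf_eq0 (negbTE b0) orbF => /eqP s0.
by split=> i; case: (ord3P i) => ->.
Qed.

Section Prod22Lift.
Variable p : nat.
Hypothesis hp : prime p.

Lemma prod22_dvdz_lift_step j k (a a' b b' : 'I_3 -> int) : (j < k)%N ->
  (forall m, ((p ^ k)%:Z %| P22 a' b' m - P22 a b m)%Z) -> b' o0 = b o0 ->
  (forall i, ((p ^ j)%:Z %| a' i - a i)%Z) -> (forall i, ((p ^ j)%:Z %| b' i - b i)%Z) ->
  ((a' o2)%:~R : 'F_p) != 0 -> ((b o0)%:~R : 'F_p) != 0 ->
  ((b o1)%:~R : 'F_p) = 0 -> ((b o2)%:~R : 'F_p) = 0 ->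
  (forall i, ((p ^ j.+1)%:Z %| a' i - a i)%Z) /\ (forall i, ((p ^ j.+1)%:Z %| b' i - b i)%Z).
Proof.
move=> jk hk eb0 ha hb a2 b0 b1 b2; set q := (p ^ j)%:Z.
have q_neq0 : q != 0 by rewrite eqz_nat -lt0n expn_gt0 prime_gt0.
have [s ea] : exists s, a = fun i => a' i - q * s i.
  exists (fun i => ((a' i - a i) %/ q)%Z); apply: funext => i.
  by rewrite mulrC divzK ?ha // opprB addrC subrK.
have [t eb'] : exists t, b' = fun i => b i + q * t i.
  exists (fun i => ((b' i - b i) %/ q)%Z); apply: funext => i.
  by rewrite mulrC divzK ?hb // addrC subrK.
have t0 : t o0 = 0.
  move: eb0; rewrite eb' /= => /eqP; rewrite -subr_eq0 (addrC (b o0)) addrK.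
  by rewrite mulf_eq0 (negbTE q_neq0) => /eqP.
(* the congruence mod p^k makes the linearization a' t + s b vanish mod p *)
have pL m : (p%:Z %| P22 a' t m + P22 s b m)%Z.
  have := hk m; rewrite ea eb' prod22_perturb.
  rewrite -(subnKC (ltnW jk)) expnD PoszM (dvdz_mul2l q_neq0); apply: dvdz_trans.
  by rewrite dvdzE /= dvdn_exp // subn_gt0.
have L0 m : P22 (intr \o a') (intr \o t) m + P22 (intr \o s) (intr \o b) m = 0 :> 'F_p.
  by apply/eqP; rewrite -!prod22_rmorph -rmorphD Fp_intr_eq0.
have [s_p t_p] := prod22_linear_eq0 a2 b0 b1 b2 (congr1 intr t0) L0.
have -> : (p ^ j.+1)%:Z = q * p%:Z by rewrite expnSr PoszM.
split=> i; [rewrite ea /= opprB addrC subrK | rewrite eb' /= addrC addKr].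
  by rewrite dvdz_mul2l // -Fp_intr_eq0 //; apply/eqP/s_p.
by rewrite dvdz_mul2l // -Fp_intr_eq0 //; apply/eqP/t_p.
Qed.

Lemma prod22_dvdz_lift k (a a' b b' : 'I_3 -> int) : (0 < k)%N ->
  (forall m, ((p ^ k)%:Z %| P22 a' b' m - P22 a b m)%Z) -> b' o0 = b o0 ->
  (forall i, (p%:Z %| a' i - a i)%Z) -> (forall i, (p%:Z %| b' i - b i)%Z) ->
  ((a' o2)%:~R : 'F_p) != 0 -> ((b o0)%:~R : 'F_p) != 0 ->
  ((b o1)%:~R : 'F_p) = 0 -> ((b o2)%:~R : 'F_p) = 0 ->
  (forall i, ((p ^ k)%:Z %| a' i - a i)%Z) /\ (forall i, ((p ^ k)%:Z %| b' i - b i)%Z).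
Proof.
move=> k_gt0 hk eb0 ha hb a2 b0 b1 b2.
suff lift j : (j < k)%N -> (forall i, ((p ^ j.+1)%:Z %| a' i - a i)%Z) /\
    (forall i, ((p ^ j.+1)%:Z %| b' i - b i)%Z).
  by have := lift k.-1; rewrite prednK // => /(_ (leqnn k)).
elim: j => [|j IH] jk; first by rewrite expn1.
have [ha' hb'] := IH (ltnW jk).
exact: prod22_dvdz_lift_step jk hk eb0 ha' hb' a2 b0 b1 b2.
Qed.

End Prod22Lift.

Section Fibres.
Variables (p : nat) (R : realType).
Hypothesis hp : prime p.
Variable mu : {measure set (ZpV p I9) -> \bar R}.
Variable nu : {measure set (ZpV p I8) -> \bar R}.
Hypotheses (Hmu : is_haar mu) (Hnu : is_haar nu).
Variable Fbar : I9 -> 'F_p.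
Hypotheses (F20 : Fbar (o2, o0) != 0) (F21 : Fbar (o2, o1) = 0)
  (F22 : Fbar (o2, o2) = 0) (F02 : Fbar (o0, o2) != 0).

Local Notation S := (residue_class Fbar).
Local Notation T := (residue_class (Phi_p Fbar)).
Let p_gt0 := prime_gt0 hp.

Definition fibre k (w : ZpV p I8) : set (ZpV p I9) := @Phi p @^-1` zball w k `&` S.

Lemma fibre_zdig_uniq k w (F F' : ZpV p I9) : (0 < k)%N ->
  fibre k w F -> fibre k w F' -> zdig (F (o2, o0)) k = zdig (F' (o2, o0)) k ->
  forall i, zdig (F i) k = zdig (F' i) k.
Proof.
move=> k_gt0 [wF SF] [wF' SF'] eF20.
pose row (G : ZpV p I9) j i := zdig (G (j, i)) k.
have red_row G j i : S G -> ((row G j i)%:~R : 'F_p) = Fbar (j, i).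
  by move=> SG; rewrite /row Zp_red_zdig.
have hk m :
    ((p ^ k)%:Z %| P22 (row F o0) (row F o2) m - P22 (row F' o0) (row F' o2) m)%Z.
  have /eqP := wF (inr m); rewrite -(wF' (inr m)) !zdig_Phi_inr eqz_mod_dvd.
  by rewrite -opprD rpredN.
have hres i : (p%:Z %| zdig (F i) k - zdig (F' i) k)%Z.
  by rewrite -Fp_intr_eq // !Zp_red_zdig // SF SF'.
have := prod22_dvdz_lift hp k_gt0 hk eF20 (fun i => hres (o0, i)) (fun i => hres (o2, i)).
rewrite !red_row // => /(_ F02 F20 F21 F22) [h0 h2] [j i].
case: (ord3P j) => ->; [exact: zdig_eq_dvd (h0 i) | | exact: zdig_eq_dvd (h2 i)].
exact: etrans (wF (inl i)) (esym (wF' (inl i))).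
Qed.

Lemma card_fibre_le k w : (0 < k)%N -> (#|digits_in k (fibre k w)| <= p ^ k.-1)%N.
Proof.
move=> k_gt0.
have fibre_mod_p (e : {ffun I9 -> 'I_(p ^ k)}) :
    fibre k w (liftv e) -> (e (o2, o0) %% p)%N = Fbar (o2, o0).
  case=> _ /(_ (o2, o0)); rewrite -(Zp_red_zdig hp _ k_gt0) zdig_liftv -pmulrn => <-.
  by rewrite val_Fp_nat.
have q_lt (d : {ffun I9 -> 'I_(p ^ k)}) : (d (o2, o0) %/ p < p ^ k.-1)%N.
  by rewrite ltn_divLR // -expnSr prednK.
(* on the fibre, d is determined by d (o2, o0), whose residue mod p is fixed *)
pose q d := Ordinal (q_lt d).
suff q_inj : {in digits_in k (fibre k w) &, injective q}.
  by rewrite -(card_in_imset q_inj) -[X in (_ <= X)%N]card_ord max_card.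
move=> d d'; rewrite !inE => Fd Fd' /(congr1 val) /= eq_div.
apply: liftv_zdig_inj; apply: (fibre_zdig_uniq k_gt0 Fd Fd').
rewrite !zdig_liftv; congr Posz.
by rewrite (divn_eq (d _) p) (divn_eq (d' _) p) eq_div !fibre_mod_p.
Qed.

Lemma card_digits_sum_fibres k : (0 < k)%N ->
  #|digits_in k S| = (\sum_(e in digits_in k T) #|digits_in k (fibre k (liftv e))|)%N.
Proof.
move=> k_gt0; rewrite -sum1_card.
rewrite (partition_big (fun d => digv p_gt0 k (Phi (liftv d))) (mem (digits_in k T))) /=.
  apply: eq_bigr => e _; rewrite sum1_card; apply: eq_card => d; rewrite !inE.
  apply/andP/asboolP => [[Sd /eqP/digv_zball eF]|[eF Sd]].
    by split; last by move: Sd; rewrite inE.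
  by split; [rewrite inE | apply/eqP/digv_zball].
move=> d; rewrite !inE => Sd.
have TPhi : T (Phi (liftv d)) by apply: (Phi_residue_class hp); exists (liftv d).
apply: (residue_class_cylinder hp k_gt0 _ TPhi) => o.
by rewrite zdig_liftv_digv.
Qed.

Lemma card_fibre k w : (0 < k)%N -> T w -> #|digits_in k (fibre k w)| = (p ^ k.-1)%N.
Proof.
move=> k_gt0 Tw; rewrite /fibre -(zball_liftv_digv p_gt0 k w).
apply: (bounded_sum_eq_const (P := digits_in k T)
  (f := fun e => #|digits_in k (fibre k (liftv e))|)).
- by move=> e _; apply: card_fibre_le.
- rewrite -card_digits_sum_fibres // (card_digits_residue_class hp Hmu) //.
  rewrite (card_digits_residue_class hp Hnu) //.
  rewrite card_prod card_sum !card_ord -expnD; congr (_ ^ _)%N; lia.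
- rewrite inE; apply: (residue_class_cylinder hp k_gt0 _ Tw) => o.
  by rewrite zdig_liftv_digv.
Qed.

Lemma fibre_cylinder k w : (0 < k)%N -> cylinder k (fibre k w).
Proof.
move=> k_gt0.
by apply: cylinderI; [apply: Phi_preimage_cylinder | apply: residue_class_cylinder].
Qed.

Lemma image_fibre k w : @Phi p @` fibre k w `<=` zball w k `&` T.
Proof. by move=> _ [F [wF SF] <-]; split=> //; apply: (Phi_residue_class hp); exists F. Qed.

Let p_neq0 : (p%:R : R) != 0.
Proof. by rewrite pnatr_eq0 -lt0n. Qed.

Lemma measure_fibre k w : mu (fibre k w) = (((p%:R : R)^-1)%:E * nu (zball w k `&` T))%E.
Proof.
case: k => [|k].
  rewrite /fibre !zball0 preimage_setT setTI setTI (residue_class_measure hp Hmu).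
  rewrite (residue_class_measure hp Hnu) -EFinM card_prod card_sum !card_ord.
  by rewrite -invfM -exprS.
have [Tw|nTw] := pselect (T w); last first.
  have wT0 : zball w k.+1 `&` T = set0.
    apply/seteqP; split=> // x [wx Tx]; apply: nTw.
    by apply: (residue_class_cylinder hp (ltn0Sn k) _ Tx) => o; rewrite wx.
  have fibre0 : fibre k.+1 w = set0.
    apply/seteqP; split=> // F wF.
    have : (zball w k.+1 `&` T) (Phi F) by apply: image_fibre; exists F.
    by rewrite wT0.
  by rewrite wT0 fibre0 !measure0 mule0.
have -> : zball w k.+1 `&` T = zball w k.+1.
  apply/setIidl => x wx; apply: (residue_class_cylinder hp (ltn0Sn k) _ Tw) => o.
  by rewrite wx.
rewrite Hnu (cylinder_measure p_gt0 Hmu (fibre_cylinder (w := w) (ltn0Sn k))) card_fibre //.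
rewrite -EFinM natrX card_prod card_sum !card_ord; congr EFin.
have -> : (3 * 3 * k.+1 = k + ((3 + 5) * k.+1).+1)%N by lia.
by rewrite exprD exprS; field; rewrite ?expf_neq0 ?p_neq0.
Qed.

Lemma measure_Phi_preimage B : measurable B ->
  mu (@Phi p @^-1` B `&` S) = (((p%:R : R)^-1)%:E * nu (B `&` T))%E.
Proof.
move=> mB; have mS := residue_class_measurable hp Fbar.
have mT := residue_class_measurable hp (Phi_p Fbar).
apply: (zball_measure_unique (m1 := pushforward (mrestr mu mS) (@Phi p))
  (m2 := mscale ((p%:R : R)^-1)%:nng (mrestr nu mT))) => [|mPhi|mPhi v k|].
- exact: measurable_Phi.
- change (mu (@Phi p @^-1` setT `&` S) < +oo)%E.
  by rewrite preimage_setT setTI residue_class_measure // ltry.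
- exact: measure_fibre.
- exact: mB.
Qed.

Lemma Phi_measure_preserving : measure_preserving_restr mu nu S T (@Phi p).
Proof.
split=> [|B mB]; first exact: Phi_residue_class.
have mT := residue_class_measurable hp (Phi_p Fbar).
split.
  apply: measurableI; first exact: residue_class_measurable.
  by rewrite -[X in measurable X]setTI; apply: measurable_Phi.
have nuTB_le : (nu (T `&` B) <= nu T)%E.
  by apply: le_measure; rewrite ?inE //; apply: measurableI.
have nuTB_fin : nu (T `&` B) \is a fin_num.
  by rewrite ge0_fin_numE // (le_lt_trans nuTB_le) // residue_class_measure // ltry.
rewrite setIC measure_Phi_preimage // setIC -(fineK nuTB_fin) -EFinM /=.
rewrite !residue_class_measure // card_prod card_sum !card_ord /=.
by field; rewrite ?expf_neq0 ?p_neq0.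
Qed.

End Fibres.

Lemma bqf_irreducible_c_neq0 (p : nat) (a b c : 'F_p) : bqf_irreducible a b c -> c != 0.
Proof.
by move=> irr; apply/eqP => c0; apply: irr; exists 1, 0, a, b; rewrite c0; split; ring.
Qed.

Theorem lemma5p3 (p : nat) (hp : prime p) (R : realType)
  (mu : {measure set (ZpV p ('I_3 * 'I_3)%type) -> \bar R})
  (nu : {measure set (ZpV p ('I_3 + 'I_5)%type) -> \bar R})
  (Hmu : is_haar mu) (Hnu : is_haar nu)
  (Fbar : 'I_3 * 'I_3 -> 'F_p) :
  ((exists a b c : 'F_p, bqf_irreducible a b c /\ Fbar = Fbar_i a b c)
   \/ Fbar = Fbar_ii p) ->
  measure_preserving_restr mu nu (residue_class Fbar)
    (residue_class (Phi_p Fbar)) (@Phi p).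
Proof.
case=> [[a [b [c [irr ->]]]]|->]; apply: (Phi_measure_preserving hp Hmu Hnu) => //.
all: exact: bqf_irreducible_c_neq0 irr.
Qed.
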